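(* Let $A$ be the Lie algebra of formal vector fields below and $H^*(A,SO(2))$ its cohomology relative to $J$. Then $H^0(A,SO(2))\cong\mathbb C$ with representative $1$; $H^2(A,SO(2))\cong\mathbb C$ with representative $\omega^{-1}\omega^1$; $H^3(A,SO(2))\cong\mathbb C$ with representative $(\omega^{-1}\omega^1-\bar\omega^{-1}\bar\omega^1)(\omega^0+\bar\omega^0)$; $H^5(A,SO(2))\cong\mathbb C$ with representative $\omega^1\omega^{-1}\bar\omega^1\bar\omega^{-1}(\omega^0+\bar\omega^0)$; and $H^k(A,SO(2))=0$ for all other $k$.
   Context: $A$ is the complex Lie algebra with basis $x^n\partial_x,\ \bar x^n\partial_{\bar x}$ ($n\ge0$) and brackets $[x^n\partial_x,x^m\partial_x]=(m-n)x^{n+m-1}\partial_x$, the complex conjugate relations for $\bar x^n\partial_{\bar x}$, and $[x^n\partial_x,\bar x^m\partial_{\bar x}]=0$. The cochain complex $C^*(A)$ is the exterior algebra on the dual basis $\{\omega^n,\bar\omega^n\}_{n\ge-1}$, $\omega^n(x^m\partial_x)=\delta^m_{n+1}$, $\omega^n(\bar x^m\partial_{\bar x})=0$, $\bar\omega^n(x^m\partial_x)=0$, $\bar\omega^n(\bar x^m\partial_{\bar x})=\delta^m_{n+1}$, with differential determined by $d\omega(U,V)=-\omega([U,V])$ on 1-cochains. Let $J=x\partial_x-\bar x\partial_{\bar x}$. $H^*(A,SO(2))$ is the cohomology of the subcomplex of basic cochains, i.e. those $\omega$ with $i_J\omega=0$ and $L_J\omega=(i_Jd+di_J)\omega=0$.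 *)

From HB Require Import structures.
From mathcomp Require Import all_boot all_order all_algebra.
From mathcomp Require Import reals complex.
Set Implicit Arguments. Unset Strict Implicit. Unset Printing Implicit Defensive.
Import Order.TTheory GRing.Theory Num.Theory.
Local Open Scope ring_scope.

(* Basis of A: (false, m) = x^m d/dx ,  (true, m) = xbar^m d/dxbar . *)
Definition basisA := (bool * nat)%type.

(* Dual basis: the generator omega^n (n >= -1) is the dual of (false, n+1),
   omegabar^n is the dual of (true, n+1); i.e. generators are also indexed
   by basisA, gen u evaluating to 1 on u and to 0 on the other basis vectors. *)
Definition om (n : int) : basisA := (false, absz (n + 1)%R).
Definition omb (n : int) : basisA := (true, absz (n + 1)%R).

Section Cochains.
Variable C : fieldType.

(* Bracket of two basis vectors: a scalar times a basis vector.
   [x^n d, x^m d] = (m - n) x^(n+m-1) d ; conjugate likewise ; mixed = 0.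
   (When n = m = 0 the coefficient is 0, so the basis vector is irrelevant.) *)
Definition brA (u v : basisA) : C * basisA :=
  if u.1 == v.1 then ((v.2)%:R - (u.2)%:R, (u.1, (u.2 + v.2).-1)) else (0, u).

(* A k-cochain is an alternating multilinear form on A; it is represented by
   its values on tuples (lists) of basis vectors. *)
Definition form := seq basisA -> C.

Definition del (j : nat) (s : seq basisA) := take j s ++ drop j.+1 s.

Definition alternating (w : form) :=
  (forall a x y b, w (a ++ x :: y :: b) = - w (a ++ y :: x :: b)) /\
  (forall s, ~~ uniq s -> w s = 0).

(* The form lies in the exterior algebra on the dual basis {omega^n, omegabar^n}:
   it only involves finitely many generators. *)
Definition fin_generated (w : form) :=
  exists S : seq basisA, forall s, w s != 0 -> all (mem S) s.

Definition cochain (k : nat) (w : form) :=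
  [/\ forall s, size s != k -> w s = 0, alternating w & fin_generated w].

(* Chevalley--Eilenberg differential (trivial coefficients):
   dw(U_0..U_k) = sum_{i<j} (-1)^(i+j) w([U_i,U_j], U_0..^U_i..^U_j..U_k);
   on 1-cochains dw(U,V) = - w([U,V]). *)
Definition dA (w : form) : form := fun s =>
  \sum_(j < size s) \sum_(i < j)
     (-1) ^+ (i + j) * (brA (nth (false, 0%N) s i) (nth (false, 0%N) s j)).1 *
     w ((brA (nth (false, 0%N) s i) (nth (false, 0%N) s j)).2 :: del i (del j s)).

(* J = x d/dx - xbar d/dxbar ; interior product and Lie derivative. *)
Definition iJ (w : form) : form := fun s => w ((false, 1%N) :: s) - w ((true, 1%N) :: s).
Definition LJ (w : form) : form := fun s => iJ (dA w) s + dA (iJ w) s.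

Definition basic (k : nat) (w : form) :=
  [/\ cochain k w, forall s, iJ w s = 0 & forall s, LJ w s = 0].

Definition closed (w : form) := forall s, dA w s = 0.

Definition exact (k : nat) (w : form) :=
  match k with
  | 0%N => forall s, w s = 0
  | k'.+1 => exists eta, basic k' eta /\ forall s, dA eta s = w s
  end.

Definition H_is_line_spanned_by (k : nat) (r : form) :=
  [/\ basic k r, closed r, ~ exact k r &
      forall w, basic k w -> closed w ->
        exists c : C, exact k (fun s => w s - c * r s)].

Definition H_vanishes (k : nat) :=
  forall w, basic k w -> closed w -> exact k w.

(* Wedge monomial  g_1 g_2 ... g_n  as a form:
   (a_1 ^ ... ^ a_n)(U_1..U_n) = det (a_i(U_j)), expanded along the first row. *)
Fixpoint mono (gs : seq basisA) : form := fun s =>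
  match gs with
  | [::] => (s == [::])%:R
  | g :: gs' => \sum_(j < size s) (-1) ^+ j * (g == nth (false, 0%N) s j)%:R *
                  mono gs' (del j s)
  end.

Definition addf (v w : form) : form := fun s => v s + w s.
Definition subf (v w : form) : form := fun s => v s - w s.

End Cochains.

Definition rep0 (C : fieldType) : form C := mono C [::].
Definition rep2 (C : fieldType) : form C := mono C [:: om (-1); om 1].
Definition rep3 (C : fieldType) : form C :=
  subf (addf (mono C [:: om (-1); om 1; om 0]) (mono C [:: om (-1); om 1; omb 0]))
       (addf (mono C [:: omb (-1); omb 1; om 0]) (mono C [:: omb (-1); omb 1; omb 0])).
Definition rep5 (C : fieldType) : form C :=
  addf (mono C [:: om 1; om (-1); omb 1; omb (-1); om 0])
       (mono C [:: om 1; om (-1); omb 1; omb (-1); omb 0]).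

From HB Require Import structures.
From mathcomp Require Import all_boot all_order all_algebra.
From mathcomp Require Import reals complex.
From mathcomp Require Import boolp ring zify.
Set Implicit Arguments. Unset Strict Implicit. Unset Printing Implicit Defensive.
Import Order.TTheory GRing.Theory Num.Theory.
Local Open Scope ring_scope.

(* The Euler fields X = x d/dx and Xbar = xbar d/dxbar act diagonally: on a
   cochain evaluated at a word of basis vectors, the Lie derivative along X is
   multiplication by minus the X-weight of the word, each x^m d/dx counting
   m - 1.  By Cartan's formula L_X = i_X d + d i_X, dividing by the weight gives
   a contracting homotopy on cochains of nonzero X-weight which preserves
   basicness, so a closed basic cochain is cohomologous to its X-weight zero
   part; as L_J = L_X - L_Xbar, that part also has Xbar-weight zero.  Such
   cochains are combinations of the 16 monomials obtained by multiplying one of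
   1, ω^0, ω^-1 ω^1, ω^-1 ω^0 ω^1 by a conjugate one, and the cohomology of this
   finite complex is computed degree by degree. *)

Notation x0 := (false, 0%N).

(* [A m] is x^m d/dx and [B m] its conjugate; as cochain generators they are
   ω^(m-1) and ωbar^(m-1). *)
Definition A0 : basisA := (false, 0%N).
Definition A1 : basisA := (false, 1%N).
Definition A2 : basisA := (false, 2%N).
Definition B0 : basisA := (true, 0%N).
Definition B1 : basisA := (true, 1%N).
Definition B2 : basisA := (true, 2%N).

Lemma del_cons0 (x : basisA) s : del 0 (x :: s) = s.
Proof. by rewrite /del /= drop0. Qed.

Lemma del_consS (x : basisA) j s : del j.+1 (x :: s) = x :: del j s.
Proof. by []. Qed.

Lemma size_del (s : seq basisA) j : (j < size s)%N -> size (del j s) = (size s).-1.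
Proof. by move=> Hj; rewrite /del size_cat size_take size_drop Hj; lia. Qed.

Lemma perm_del (s : seq basisA) j : (j < size s)%N -> perm_eq s (nth x0 s j :: del j s).
Proof.
move=> Hj; rewrite /del -[s in perm_eq s _](cat_take_drop j) (drop_nth x0 Hj).
by rewrite -[nth x0 s j :: _]/([:: nth x0 s j] ++ _) perm_catCA.
Qed.

Lemma perm_mid (m b : seq basisA) x : perm_eq (m ++ x :: b) (x :: m ++ b).
Proof. by rewrite -[x :: m ++ b]cat1s -[x :: b]cat1s perm_catCA. Qed.

(* Weights under the Euler field of side [b]; [wt] is a [foldr] rather than a
   big sum so that [vm_compute] evaluates it on concrete words. *)
Definition wt1 (b : bool) (x : basisA) : int := if b == x.1 then (x.2)%:Z - 1 else 0.
Definition wt (b : bool) (s : seq basisA) : int := foldr (fun x acc => wt1 b x + acc) 0 s.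

Lemma wtE b s : wt b s = \sum_(x <- s) wt1 b x.
Proof. by elim: s => [|x s IH]; rewrite ?big_nil ?big_cons //= IH. Qed.

Lemma wt_perm b s t : perm_eq s t -> wt b s = wt b t.
Proof. by rewrite !wtE; exact: perm_big. Qed.

Lemma wt_euler b b' s : wt b ((b', 1%N) :: s) = wt b s.
Proof. by rewrite /= /wt1; case: (b == b'); rewrite /= ?subrr add0r. Qed.

Lemma wt_ge0 b s : (b, 0%N) \notin s -> 0 <= wt b s.
Proof.
elim: s => [|[xb xm] s IH] //=; rewrite inE negb_or => /andP [Hx Hs].
have := IH Hs; rewrite /wt1 /=; case: eqP => [E|_]; last by rewrite add0r.
subst xb; case: xm Hx => [|m] Hx; first by rewrite eqxx in Hx.
move=> H; lia.
Qed.

Lemma wt_geN1 b s : uniq s -> -1 <= wt b s.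
Proof.
elim: s => [|[xb xm] s IH] //= /andP [Hx Hs].
have := IH Hs; rewrite /wt1 /=; case: eqP => [E|_] H; last by rewrite add0r.
subst xb; case: xm Hx => [|m] Hx; last by lia.
have := wt_ge0 Hx; lia.
Qed.

Lemma wt0_mem_le2 b s x : uniq s -> wt b s = 0 -> x \in s -> x.1 = b -> (x.2 <= 2)%N.
Proof.
move=> Hu H0 Hx Hb; have Hp := perm_to_rem Hx.
have := wt_geN1 b (rem_uniq x Hu); rewrite (wt_perm b Hp) /= in H0.
move: H0; rewrite /wt1 Hb eqxx; case: x Hx Hp Hb => [xb xm] /= _ _ _ H0 H1.
lia.
Qed.

Definition wt0_alphabet := [:: A0; A1; A2; B0; B1; B2].

Lemma wt0_mem_alphabet s x : uniq s -> wt false s = 0 -> wt true s = 0 ->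
  x \in s -> x \in wt0_alphabet.
Proof.
move=> Hu HA HB Hx; case: x Hx => [xb xm] Hx.
have : (xm <= 2)%N.
  by case: xb Hx => Hx; [exact: (wt0_mem_le2 Hu HB Hx) | exact: (wt0_mem_le2 Hu HA Hx)].
by case: xb {Hx}; case: xm => [|[|[|m]]].
Qed.

Definition wt0_words : seq (seq basisA) :=
  [seq h ++ hb | h <- [:: [::]; [:: A1]; [:: A0; A2]; [:: A0; A1; A2]],
                 hb <- [:: [::]; [:: B1]; [:: B0; B2]; [:: B0; B1; B2]]].

Lemma wt0_words_mask (m : seq bool) : size m = 6%N ->
  (wt false (mask m wt0_alphabet) == 0) ==> (wt true (mask m wt0_alphabet) == 0) ==>
  (mask m wt0_alphabet \in wt0_words).
Proof.
by case: m => [|b0 [|b1 [|b2 [|b3 [|b4 [|b5 [|? ?]]]]]]] //= _;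
  case: b0; case: b1; case: b2; case: b3; case: b4; case: b5; vm_compute.
Qed.

Lemma wt0_perm_words s : uniq s -> wt false s = 0 -> wt true s = 0 ->
  exists2 t, t \in wt0_words & perm_eq s t.
Proof.
move=> Hu HA HB; set t := [seq x <- wt0_alphabet | x \in s].
have Hp : perm_eq s t.
  apply: uniq_perm => //; first by rewrite filter_uniq.
  move=> x; rewrite mem_filter; apply/idP/andP => [Hx|[]//].
  by split=> //; exact: (wt0_mem_alphabet Hu HA HB).
exists t => //.
have := wt0_words_mask (m := [seq x \in s | x <- wt0_alphabet]) erefl.
by rewrite -filter_mask -/t -!(wt_perm _ Hp) HA HB eqxx.
Qed.

Definition wt0_deg k := [seq t <- wt0_words | size t == k].

Lemma wt0_deg0 : wt0_deg 0 = [:: [::]]. Proof. by []. Qed.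
Lemma wt0_deg1 : wt0_deg 1 = [:: [:: B1]; [:: A1]]. Proof. by []. Qed.
Lemma wt0_deg2 : wt0_deg 2 = [:: [:: B0; B2]; [:: A1; B1]; [:: A0; A2]].
Proof. by []. Qed.
Lemma wt0_deg3 :
  wt0_deg 3 = [:: [:: B0; B1; B2]; [:: A1; B0; B2]; [:: A0; A2; B1]; [:: A0; A1; A2]].
Proof. by []. Qed.
Lemma wt0_deg4 : wt0_deg 4 = [:: [:: A1; B0; B1; B2]; [:: A0; A2; B0; B2]; [:: A0; A1; A2; B1]].
Proof. by []. Qed.
Lemma wt0_deg5 : wt0_deg 5 = [:: [:: A0; A2; B0; B1; B2]; [:: A0; A1; A2; B0; B2]].
Proof. by []. Qed.
Lemma wt0_deg6 : wt0_deg 6 = [:: [:: A0; A1; A2; B0; B1; B2]].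
Proof. by []. Qed.

Lemma wt0_deg_gt6 k : (6 < k)%N -> wt0_deg k = [::].
Proof.
move=> Hk; have H : all (fun t => size t <= 6)%N wt0_words by [].
apply/eqP; rewrite -size_eq0 size_filter; apply/eqP.
rewrite (@eq_in_count _ _ pred0) ?count_pred0 // => t /(allP H) /= Ht.
by apply/negbTE; rewrite neq_ltn; apply/orP; left; exact: leq_ltn_trans Hk.
Qed.

(* Integer-valued copies of the bracket, of the monomials and of the
   differential, so that their values on concrete words can be computed by
   [vm_compute]; the cochains over C are their images (see [mono_int]). *)
Definition brZ (u v : basisA) : int * basisA :=
  if u.1 == v.1 then ((v.2)%:Z - (u.2)%:Z, (u.1, (u.2 + v.2).-1)) else (0, u).

Fixpoint sumZ (n : nat) (F : nat -> int) : int := if n is n'.+1 then sumZ n' F + F n' else 0.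

Fixpoint monoZ (gs s : seq basisA) : int :=
  if gs is g :: gs' then
    sumZ (size s) (fun j => (-1) ^+ j * ((g == nth x0 s j) : nat)%:Z * monoZ gs' (del j s))
  else ((s == [::]) : nat)%:Z.

Definition dZ (f : seq basisA -> int) s : int :=
  sumZ (size s) (fun j => sumZ j (fun i =>
    (-1) ^+ (i + j) * (brZ (nth x0 s i) (nth x0 s j)).1 *
    f ((brZ (nth x0 s i) (nth x0 s j)).2 :: del i (del j s)))).

Section Forms.
Variable C : numFieldType.
Implicit Types v w : form C.

Definition antisym v := forall a x y b, v (a ++ x :: y :: b) = - v (a ++ y :: x :: b).

Definition contr v (x : basisA) : form C := fun r => v (x :: r).

Definition lie v (x : basisA) s : C := \sum_(j < size s)
  (-1) ^+ j.+1 * (brA C x (nth x0 s j)).1 * v ((brA C x (nth x0 s j)).2 :: del j s).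

Lemma antisym_contr v x : antisym v -> antisym (contr v x).
Proof. by move=> H a y z b; rewrite /contr -!cat_cons H. Qed.

Lemma antisym0 v : antisym v -> forall p q r, v (p :: q :: r) = - v (q :: p :: r).
Proof. by move=> H p q r; exact: (H [::]). Qed.

Lemma antisym_add v1 v2 : antisym v1 -> antisym v2 -> antisym (fun s => v1 s + v2 s).
Proof. by move=> H1 H2 a x y b; rewrite H1 H2 opprD. Qed.

Lemma antisym_scale (c : C) v : antisym v -> antisym (fun s => c * v s).
Proof. by move=> H a x y b; rewrite H mulrN. Qed.

Lemma antisym_zero : antisym (fun _ => 0).
Proof. by move=> *; rewrite oppr0. Qed.

Lemma cartan v x s : (forall p q r, v (p :: q :: r) = - v (q :: p :: r)) ->
  dA v (x :: s) = lie v x s - dA (contr v x) s.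
Proof.
move=> Hs; rewrite /dA /lie /= big_ord_recl /= big_ord0 add0r.
rewrite -sumrB; apply: eq_bigr => j _.
rewrite big_ord_recl /= -sumrN; congr (_ + _).
  by rewrite /bump /= add0n del_cons0.
apply: eq_bigr => i _; rewrite /bump /= /contr.
rewrite !add1n !add0n !del_consS Hs addSn addnS !exprS.
by rewrite !mulN1r opprK mulrN.
Qed.

Lemma dA_nil v : dA v [::] = 0.
Proof. by rewrite /dA big_ord0. Qed.

Lemma lie_nil v x : lie v x [::] = 0.
Proof. by rewrite /lie big_ord0. Qed.

Lemma lie_cons v x y s : (forall p q r, v (p :: q :: r) = - v (q :: p :: r)) ->
  lie v x (y :: s) = - ((brA C x y).1 * v ((brA C x y).2 :: s)) + lie (contr v y) x s.
Proof.
move=> Hs; rewrite /lie /= big_ord_recl /= del_cons0 expr1 mulN1r mulNr; congr (_ + _).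
apply: eq_bigr => j _; rewrite /bump /= add1n del_consS Hs /contr !exprS.
by rewrite add0n !mulN1r opprK mulrN !mulNr.
Qed.

Lemma dA_ext v1 v2 : (forall s, v1 s = v2 s) -> forall s, dA v1 s = dA v2 s.
Proof. by move=> H s; apply: eq_bigr => j _; apply: eq_bigr => i _; rewrite H. Qed.

Lemma lie_ext v1 v2 x : (forall s, v1 s = v2 s) -> forall s, lie v1 x s = lie v2 x s.
Proof. by move=> H s; apply: eq_bigr => j _; rewrite H. Qed.

Lemma dA_lin v1 v2 v3 a b : (forall s, v1 s = a * v2 s + b * v3 s) ->
  forall s, dA v1 s = a * dA v2 s + b * dA v3 s.
Proof.
move=> H s; rewrite /dA !mulr_sumr -big_split; apply: eq_bigr => j _.
rewrite !mulr_sumr -big_split; apply: eq_bigr => i _.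
by rewrite H /=; ring.
Qed.

Lemma lie_lin v1 v2 v3 a b x : (forall s, v1 s = a * v2 s + b * v3 s) ->
  forall s, lie v1 x s = a * lie v2 x s + b * lie v3 x s.
Proof.
move=> H s; rewrite /lie !mulr_sumr -big_split; apply: eq_bigr => j _.
by rewrite H /=; ring.
Qed.

Lemma dA_opp v1 v2 : (forall s, v1 s = - v2 s) -> forall s, dA v1 s = - dA v2 s.
Proof.
move=> H s; rewrite (@dA_lin v1 v2 v2 (-1) 0) ?mul0r ?addr0 ?mulN1r //.
by move=> r; rewrite H mul0r addr0 mulN1r.
Qed.

Lemma lie_opp v1 v2 x : (forall s, v1 s = - v2 s) -> forall s, lie v1 x s = - lie v2 x s.
Proof.
move=> H s; rewrite (@lie_lin v1 v2 v2 (-1) 0) ?mul0r ?addr0 ?mulN1r //.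
by move=> r; rewrite H mul0r addr0 mulN1r.
Qed.

Lemma brA_anti (F : basisA -> C) x y :
  (brA C y x).1 * F (brA C y x).2 = - ((brA C x y).1 * F (brA C x y).2).
Proof.
rewrite /brA eq_sym; case: eqP => [E|_] /=; last by rewrite !mul0r oppr0.
by rewrite E addnC -mulNr opprB.
Qed.

Lemma antisym_lie v z : antisym v -> antisym (lie v z).
Proof.
move=> Hv a; elim: a v Hv => [|w a IH] v Hv x y b /=.
  have H0 := antisym0 Hv; have Hx := antisym0 (antisym_contr x Hv).
  have Hy := antisym0 (antisym_contr y Hv).
  rewrite !lie_cons // (@lie_opp (contr (contr v x) y) (contr (contr v y) x)); last first.
    by move=> r; rewrite /contr H0.
  rewrite /contr H0 [v [:: x, _ & _]]H0.
  by ring.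
have H0 := antisym0 Hv.
rewrite !lie_cons // IH; last exact: antisym_contr.
by rewrite -!cat_cons Hv mulrN opprD opprK.
Qed.

Lemma antisym_dA v : antisym v -> antisym (dA v).
Proof.
move=> Hv a; elim: a v Hv => [|z a IH] v Hv x y b /=.
  have H0 := antisym0 Hv; have Hx := antisym0 (antisym_contr x Hv).
  have Hy := antisym0 (antisym_contr y Hv).
  rewrite !cartan // !lie_cons //.
  rewrite (@dA_opp (contr (contr v x) y) (contr (contr v y) x)); last first.
    by move=> r; rewrite /contr H0.
  rewrite (brA_anti (fun u => v (u :: b))) /contr.
  by ring.
have H0 := antisym0 Hv.
rewrite !cartan // IH; last exact: antisym_contr.
by rewrite antisym_lie // opprD opprK.
Qed.

Definition lwedge (g : basisA) v s : C :=
  \sum_(j < size s) (-1) ^+ j * (g == nth x0 s j)%:R * v (del j s).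

Lemma lwedge_cons g v x s : lwedge g v (x :: s) = (g == x)%:R * v s - lwedge g (contr v x) s.
Proof.
rewrite /lwedge /= big_ord_recl /= del_cons0 expr0 mul1r -sumrN; congr (_ + _).
apply: eq_bigr => j _; rewrite /bump /= add1n del_consS /contr exprS.
by rewrite mulN1r !mulNr.
Qed.

Lemma lwedge_lin g v1 v2 v3 a b : (forall s, v1 s = a * v2 s + b * v3 s) ->
  forall s, lwedge g v1 s = a * lwedge g v2 s + b * lwedge g v3 s.
Proof.
move=> H s; rewrite /lwedge !mulr_sumr -big_split; apply: eq_bigr => j _.
by rewrite H /=; ring.
Qed.

Lemma antisym_lwedge g v : antisym v -> antisym (lwedge g v).
Proof.
move=> Hv a; elim: a v Hv => [|z a IH] v Hv x y b /=.
  have H0 := antisym0 Hv.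
  rewrite !lwedge_cons (@lwedge_lin g (contr (contr v x) y) (contr (contr v y) x)
    (contr (contr v y) x) (-1) 0); last first.
    by move=> r; rewrite /contr H0 mul0r addr0 mulN1r.
  rewrite /contr mul0r addr0 mulN1r.
  by ring.
rewrite !lwedge_cons IH; last exact: antisym_contr.
by rewrite Hv mulrN opprD opprK.
Qed.

Lemma antisym_mono gs : antisym (mono C gs).
Proof.
elim: gs => [|g gs IH] a x y b /=; first by case: a => [|? ?] /=; rewrite oppr0.
exact: (antisym_lwedge g IH).
Qed.

Lemma antisym_move_left v a m x b : antisym v ->
  v (a ++ m ++ x :: b) = (-1) ^+ size m * v (a ++ x :: m ++ b).
Proof.
move=> Hv; elim: m a => [|z m IH] a /=; first by rewrite expr0 mul1r.
rewrite -[a ++ z :: _]cat_rcons IH cat_rcons Hv exprS.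
by rewrite mulN1r mulrN mulNr.
Qed.

Lemma antisym_nonuniq v s : antisym v -> ~~ uniq s -> v s = 0.
Proof.
move=> Hv; suff H : forall a, ~~ uniq s -> v (a ++ s) = 0 by exact: (H [::]).
elim: s => [|z s IH] a //=; rewrite negb_and negbK => /orP [] Hz; last first.
  by rewrite -cat_rcons IH.
case/splitPr: Hz => m b.
rewrite -[a ++ z :: _]cat_rcons antisym_move_left // cat_rcons.
by apply/eqP; rewrite mulf_eq0 signr_eq0 /= -eqNr {1}Hv opprK.
Qed.

Lemma antisym_alternating v : antisym v -> alternating v.
Proof. by move=> Hv; split=> // s; exact: antisym_nonuniq. Qed.

Lemma antisym_perm_eq0 v s t : antisym v -> perm_eq s t -> v t = 0 -> v s = 0.
Proof.
elim: s v t => [|x s IH] v t Hv Hp.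
  by move: Hp; rewrite perm_sym => /perm_nilP ->.
have Hx : x \in t by rewrite -(perm_mem Hp) mem_head.
move: Hp; case/splitPr: Hx => m b Hp.
rewrite -[m ++ x :: b]cat0s antisym_move_left // => /eqP; rewrite mulf_eq0 signr_eq0 /= => /eqP.
apply: (IH (contr v x) (m ++ b)); first exact: antisym_contr.
by rewrite -(perm_cons x); apply: perm_trans Hp (perm_mid _ _ _).
Qed.

Lemma perm_mono_support gs s : mono C gs s != 0 -> perm_eq gs s.
Proof.
elim: gs s => [|g gs IH] s /=; first by case: s => //=; rewrite eqxx.
move=> Hne.
have : [exists j : 'I_(size s), (-1) ^+ j * (g == nth x0 s j)%:R * mono C gs (del j s) != 0].
  apply: contraR Hne => /existsPn H; rewrite big1 // => j _.
  by apply/eqP; move: (H j); rewrite negbK.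
case/existsP => j; have [E|NE] := eqVneq g (nth x0 s j); last by rewrite mulr0 mul0r eqxx.
rewrite mulr1 mulf_eq0 negb_or => /andP [_ /IH Hp].
by rewrite E perm_sym; apply: perm_trans (perm_del (ltn_ord j)) _; rewrite perm_cons perm_sym.
Qed.

Lemma wt_cons b x s : wt b (x :: s) = wt1 b x + wt b s.
Proof. by []. Qed.

Lemma lie_euler b v : antisym v -> forall s, lie v (b, 1%N) s = - ((wt b s)%:~R * v s).
Proof.
move=> Hv s; elim: s v Hv => [|[yb ym] s IH] v Hv; first by rewrite lie_nil mul0r oppr0.
rewrite lie_cons; last exact: antisym0.
rewrite IH; last exact: antisym_contr.
rewrite wt_cons intrD /contr /brA /wt1 /=.
case: eqP => [<-|_] /=; last by rewrite !mul0r add0r oppr0 !add0r.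
by rewrite add0n intrB; ring.
Qed.

Lemma cartan_euler b v : antisym v -> forall s,
  dA v ((b, 1%N) :: s) + dA (contr v (b, 1%N)) s = - ((wt b s)%:~R * v s).
Proof. by move=> Hv s; rewrite cartan ?subrK ?lie_euler //; exact: antisym0. Qed.

Lemma LJ_wt v : antisym v -> forall s, LJ v s = - ((wt false s - wt true s)%:~R * v s).
Proof.
move=> Hv s; rewrite /LJ /iJ.
rewrite (@dA_lin (fun r => v ((false, 1%N) :: r) - v ((true, 1%N) :: r))
  (contr v (false, 1%N)) (contr v (true, 1%N)) 1 (-1)); last first.
  by move=> r /=; rewrite /contr mul1r mulN1r.
have H1 := cartan_euler false Hv s; have H2 := cartan_euler true Hv s.
rewrite mul1r mulN1r intrB.
move: H1 H2; set A := dA v _; set B := dA v _; set X := dA _ s; set Y := dA _ s => H1 H2.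
have -> : A = - ((wt false s)%:~R * v s) - X by rewrite -H1 addrK.
have -> : B = - ((wt true s)%:~R * v s) - Y by rewrite -H2 addrK.
ring.
Qed.

Lemma antisym_wtscale b (g : int -> C) v : antisym v -> antisym (fun r => g (wt b r) * v r).
Proof.
move=> Hv a x y c; rewrite Hv mulrN; congr (- (g _ * _)).
by rewrite !wtE !big_cat !big_cons /=; congr (_ + _); exact: addrCA.
Qed.

Lemma wt1_brA b x y : (brA C x y).1 != 0 -> wt1 b (brA C x y).2 = wt1 b x + wt1 b y.
Proof.
case: x y => [xb xm] [yb ym]; rewrite /brA /=.
case: (xb =P yb) => [<-|_] /=; last by rewrite eqxx.
rewrite /wt1 /=; case: (b == xb); last by rewrite addr0.
move=> Hne; have : (0 < xm + ym)%N.
  by case: xm Hne => [|?] //; case: ym => //; rewrite subrr eqxx.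
lia.
Qed.

Lemma lie_wtscale b (g : int -> C) v x : antisym v -> forall s,
  lie (fun r => g (wt b r) * v r) x s = g (wt1 b x + wt b s) * lie v x s.
Proof.
move=> Hv s; elim: s g v Hv => [|y s IH] g v Hv; first by rewrite !lie_nil mulr0.
rewrite lie_cons; last exact: antisym0 (antisym_wtscale b g Hv).
rewrite (@lie_ext _ (fun r => (fun z => g (wt1 b y + z)) (wt b r) * contr v y r)); last first.
  by move=> r; rewrite /contr wt_cons.
rewrite (IH (fun z => g (wt1 b y + z)) (contr v y)); last exact: antisym_contr.
rewrite [in RHS]lie_cons; last exact: antisym0.
have -> : (brA C x y).1 * (g (wt b ((brA C x y).2 :: s)) * v ((brA C x y).2 :: s)) =
    g (wt1 b x + wt b (y :: s)) * ((brA C x y).1 * v ((brA C x y).2 :: s)).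
  have [->|Hne] := eqVneq (brA C x y).1 0; first by rewrite !mul0r mulr0.
  by rewrite !wt_cons wt1_brA // addrA mulrCA.
by rewrite wt_cons addrCA mulrDr mulrN.
Qed.

Lemma dA_wtscale b (g : int -> C) v : antisym v -> forall s,
  dA (fun r => g (wt b r) * v r) s = g (wt b s) * dA v s.
Proof.
move=> Hv s; elim: s g v Hv => [|x s IH] g v Hv; first by rewrite !dA_nil mulr0.
rewrite cartan; last exact: antisym0 (antisym_wtscale b g Hv).
rewrite (@dA_ext _ (fun r => (fun z => g (wt1 b x + z)) (wt b r) * contr v x r)); last first.
  by move=> r; rewrite /contr wt_cons.
rewrite (IH (fun z => g (wt1 b x + z)) (contr v x)); last exact: antisym_contr.
by rewrite lie_wtscale // [in RHS]cartan ?wt_cons ?mulrBr //; exact: antisym0.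
Qed.

Lemma sumZ_int n (F : nat -> int) : \sum_(j < n) ((F j)%:~R : C) = (sumZ n F)%:~R.
Proof. by elim: n => [|n IH]; rewrite ?big_ord0 // big_ord_recr /= IH intrD. Qed.

Lemma brA_int1 u y : (brA C u y).1 = ((brZ u y).1)%:~R.
Proof. by rewrite /brA /brZ; case: ifP => _ //=; rewrite intrB. Qed.

Lemma brA_int2 u y : (brA C u y).2 = (brZ u y).2.
Proof. by rewrite /brA /brZ; case: ifP. Qed.

Lemma mono_int gs s : mono C gs s = (monoZ gs s)%:~R.
Proof.
elim: gs s => [|g gs IH] s /=; first by case: (s == [::]).
rewrite -sumZ_int; apply: eq_bigr => j _.
by rewrite IH !intrM intr_sign; case: (g == _).
Qed.

Lemma dA_int (f : seq basisA -> int) v : (forall s, v s = (f s)%:~R) ->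
  forall s, dA v s = (dZ f s)%:~R.
Proof.
move=> H s; rewrite /dA /dZ -sumZ_int; apply: eq_bigr => j _.
rewrite -sumZ_int; apply: eq_bigr => i _.
by rewrite H !brA_int2 brA_int1 !intrM intr_sign.
Qed.

Definition wt0_form k v :=
  forall s, v s != 0 -> [/\ size s = k, wt false s = 0 & wt true s = 0].

Lemma wt0_form_eq0 k v : antisym v -> wt0_form k v ->
  (forall t, t \in wt0_deg k -> v t = 0) -> forall s, v s = 0.
Proof.
move=> Hv Hsup Hc s; apply/eqP; apply/negPn/negP => Hne.
have [Hk HA HB] := Hsup s Hne.
have Hu : uniq s by apply: contraR Hne => /(antisym_nonuniq Hv) ->; rewrite eqxx.
have [t Ht Hp] := wt0_perm_words Hu HA HB.
move/eqP: Hne; apply; apply: (antisym_perm_eq0 Hv Hp); apply: Hc.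
by rewrite mem_filter -(perm_size Hp) Hk eqxx Ht.
Qed.

Lemma wt0_form_eq k v1 v2 : antisym v1 -> antisym v2 -> wt0_form k v1 -> wt0_form k v2 ->
  (forall t, t \in wt0_deg k -> v1 t = v2 t) -> forall s, v1 s = v2 s.
Proof.
move=> S1 S2 H1 H2 Hc s; apply/eqP; rewrite -subr_eq0; apply/eqP.
apply: (@wt0_form_eq0 k (fun s => v1 s - v2 s)).
- by move=> a x y b; rewrite S1 S2; ring.
- move=> r Hr; have [E|NE] := eqVneq (v1 r) 0; last exact: H1.
  by apply: H2; move: Hr; rewrite E sub0r oppr_eq0.
- by move=> t Ht; rewrite Hc ?subrr.
Qed.

Lemma wt0_form_add k v1 v2 : wt0_form k v1 -> wt0_form k v2 -> wt0_form k (fun s => v1 s + v2 s).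
Proof.
move=> H1 H2 s Hs; have [E|NE] := eqVneq (v1 s) 0; last exact: H1.
by apply: H2; move: Hs; rewrite E add0r.
Qed.

Lemma wt0_form_scale k (c : C) v : wt0_form k v -> wt0_form k (fun s => c * v s).
Proof. by move=> H s; rewrite mulf_eq0 negb_or => /andP [_ /H]. Qed.

Lemma wt0_form_zero k : wt0_form k (fun _ => 0).
Proof. by move=> s; rewrite eqxx. Qed.

Lemma wt0_form_mono gs : wt false gs = 0 -> wt true gs = 0 -> wt0_form (size gs) (mono C gs).
Proof.
move=> HA HB s /perm_mono_support Hp.
by rewrite -(perm_size Hp) -!(wt_perm _ Hp).
Qed.

Lemma wt0_form_dA k v : antisym v -> wt0_form k v -> wt0_form k.+1 (dA v).
Proof.
move=> Hv Hs s Hne.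
have Hsz : size s = k.+1.
  apply/eqP; apply: contraR Hne => Hk; apply/eqP.
  apply: big1 => j _; apply: big1 => i _.
  have -> : v ((brA C (nth x0 s i) (nth x0 s j)).2 :: del i (del j s)) = 0; last by rewrite mulr0.
  apply/eqP; apply: contraR Hk => /Hs [H _ _]; move: H => /=.
  have Hj := ltn_ord j; have Hi := ltn_ord i.
  have Hsj : size (del j s) = (size s).-1 by rewrite size_del.
  rewrite size_del; last by rewrite Hsj; move: Hi Hj; clear; lia.
  by rewrite Hsj; move: Hi Hj; clear; lia.
have Ev b r : v r = (wt b r == 0)%:R * v r.
  have [->|NE] := eqVneq (v r) 0; first by rewrite mulr0.
  by have [_ HA HB] := Hs r NE; case: b; rewrite ?HA ?HB eqxx mul1r.
have wt0 b : wt b s = 0.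
  move: Hne; rewrite (dA_ext (Ev b)) (dA_wtscale b (fun z => (z == 0)%:R) Hv).
  by have [//|NE] := eqVneq (wt b s) 0; rewrite /= mul0r eqxx.
by split; rewrite ?wt0.
Qed.

Lemma antisym_iJ v : antisym v -> antisym (iJ v).
Proof.
move=> H a x y b.
by rewrite /iJ -!cat_cons (H ((false, 1%N) :: a)) (H ((true, 1%N) :: a)) opprD.
Qed.

Lemma wt0_form_iJ k v : wt0_form k.+1 v -> wt0_form k (iJ v).
Proof.
move=> H s; rewrite /iJ.
have [E|NE] := eqVneq (v ((false, 1%N) :: s)) 0.
  rewrite E sub0r oppr_eq0 => /H [Hk HA HB]; rewrite !wt_euler in HA HB.
  by split=> //; move: Hk => /= [].
move=> _; have [Hk HA HB] := H _ NE; rewrite !wt_euler in HA HB.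
by split=> //; move: Hk => /= [].
Qed.

Lemma wt0_form_fin_generated k v : antisym v -> wt0_form k v -> fin_generated v.
Proof.
move=> Hv Hs; exists wt0_alphabet => s Hne; have [_ HA HB] := Hs s Hne.
have Hu : uniq s by apply: contraR Hne => /(antisym_nonuniq Hv) ->; rewrite eqxx.
by apply/allP => x Hx; exact: (wt0_mem_alphabet Hu HA HB Hx).
Qed.

(* A form of weight (0, 0) is annihilated by L_J, so it is basic as soon as
   i_J kills it, which is tested on the weight-zero words. *)
Lemma wt0_form_basic k v : antisym v -> wt0_form k v ->
  (forall t, t \in wt0_deg k.-1 -> iJ v t = 0) -> basic k v.
Proof.
move=> Hv Hs Hi; split.
- split; last exact: wt0_form_fin_generated Hs.
  + by move=> s Hk; apply/eqP; apply: contraR Hk => /Hs [-> _ _]; rewrite eqxx.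
  + exact: antisym_alternating.
- case: k Hs Hi => [|k] Hs Hi; last exact: (wt0_form_eq0 (antisym_iJ Hv) (wt0_form_iJ Hs) Hi).
  have Z x s : v (x :: s) = 0 by apply/eqP; apply/negPn/negP => /Hs [].
  by move=> s; rewrite /iJ !Z subrr.
- move=> s; rewrite LJ_wt //.
  have [->|NE] := eqVneq (v s) 0; first by rewrite mulr0 oppr0.
  by have [_ -> ->] := Hs s NE; rewrite subrr mul0r oppr0.
Qed.

Definition wt0_part v : form C := fun s => (wt false s == 0)%:R * v s.

Lemma basic_antisym k v : basic k v -> antisym v.
Proof. by case=> [[_ [H _] _] _ _]. Qed.

Lemma basic_wt_eq k v s : basic k v -> (wt false s - wt true s)%:~R * v s = 0.
Proof.
move=> Hb; have := LJ_wt (basic_antisym Hb) s.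
by case: Hb => _ _ ->; move/eqP; rewrite eq_sym oppr_eq0 => /eqP.
Qed.

Lemma basic_add k v1 v2 : basic k v1 -> basic k v2 -> basic k (fun s => v1 s + v2 s).
Proof.
move=> H1 H2; have S1 := basic_antisym H1; have S2 := basic_antisym H2.
case: H1 => [[Z1 _ [L1 F1]] I1 J1]; case: H2 => [[Z2 _ [L2 F2]] I2 J2].
split.
- split.
  + by move=> s Hs; rewrite Z1 // Z2 // addr0.
  + exact/antisym_alternating/antisym_add.
  + exists (L1 ++ L2) => s Hs; apply/allP => x Hx.
    suff : x \in L1 ++ L2 by []; rewrite mem_cat.
    have [E|NE] := eqVneq (v1 s) 0.
      by move: Hs; rewrite E add0r => /F2 /allP /(_ x Hx) H; apply/orP; right.
    by move/allP: (F1 s NE) => /(_ x Hx) H; apply/orP; left.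
- move=> s; move: (I1 s) (I2 s); rewrite /iJ => E1 E2.
  by rewrite opprD addrACA E1 E2 addr0.
- move=> s; rewrite LJ_wt ?mulrDr ?opprD; last exact: antisym_add.
  by have := LJ_wt S1 s; have := LJ_wt S2 s; rewrite J1 J2 => <- <-; rewrite addr0.
Qed.

Lemma basic_zero k : basic k (fun _ => 0 : C).
Proof.
apply: wt0_form_basic; [exact: antisym_zero | exact: wt0_form_zero |].
by move=> t _; rewrite /iJ subrr.
Qed.

Lemma dA_zero s : dA (fun _ => 0 : C) s = 0.
Proof. by apply: big1 => j _; apply: big1 => i _; rewrite mulr0. Qed.

Lemma dA_wt0_part v s : antisym v -> dA (wt0_part v) s = (wt false s == 0)%:R * dA v s.
Proof. by move=> Hv; exact: (dA_wtscale false (fun z => (z == 0)%:R) Hv). Qed.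

Lemma wt0_part_basic k v : basic k v -> basic k (wt0_part v).
Proof.
move=> Hb; have Hv := basic_antisym Hb.
case: (Hb) => [[Hsz _ [S HS]] HiJ _].
have Hp : antisym (wt0_part v) := antisym_wtscale false (fun z => (z == 0)%:R) Hv.
split.
- split.
  + by move=> s /Hsz; rewrite /wt0_part => ->; rewrite mulr0.
  + exact: antisym_alternating.
  + by exists S => s; rewrite /wt0_part mulf_eq0 negb_or => /andP [_ /HS].
- move=> s; rewrite /iJ /wt0_part !wt_euler -mulrBr.
  by move: (HiJ s); rewrite /iJ => ->; rewrite mulr0.
- by move=> s; rewrite LJ_wt // /wt0_part mulrCA (basic_wt_eq s Hb) mulr0 oppr0.
Qed.

Lemma wt0_part_form k v : basic k v -> wt0_form k (wt0_part v).
Proof.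
move=> Hb s; rewrite /wt0_part mulf_eq0 negb_or => /andP [H1 Hne].
have E : wt false s = 0 by move: H1; case: (wt false s =P 0) => // _; rewrite mulr0n eqxx.
have := basic_wt_eq s Hb; rewrite E sub0r intrN mulNr.
move/eqP; rewrite oppr_eq0 mulf_eq0 (negbTE Hne) orbF intr_eq0 => /eqP HB.
case: Hb => [[Hsz _ _] _ _]; split=> //.
by apply/eqP; apply: contraR Hne => /Hsz ->; rewrite eqxx.
Qed.

Lemma wt0_part_props k w : basic k w -> closed w ->
  [/\ basic k (wt0_part w), antisym (wt0_part w), wt0_form k (wt0_part w)
    & closed (wt0_part w)].
Proof.
move=> Hb Hc; have HWb := wt0_part_basic Hb; split => //.
- exact: basic_antisym HWb.
- exact: wt0_part_form.
- by move=> s; rewrite dA_wt0_part ?Hc ?mulr0 //; exact: basic_antisym Hb.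
Qed.

(* The primitive is i_X of the cochain divided by minus its X-weight, by
   Cartan's formula [cartan_euler]; since 0^-1 = 0 the weight-zero part is
   left over. *)
Lemma basic_closed_sub_wt0_exact k v : basic k.+1 v -> closed v ->
  exists eta, basic k eta /\ forall s, dA eta s = v s - wt0_part v s.
Proof.
move=> Hb Hc; have Hv := basic_antisym Hb.
pose g := fun z : int => - (z%:~R : C)^-1.
pose u := fun r => g (wt false r) * v r.
have Hu : antisym u := antisym_wtscale false g Hv.
have Hdu r : dA u r = 0 by rewrite (dA_wtscale false g Hv) Hc mulr0.
exists (contr u (false, 1%N)); split; last first.
  move=> s; have := cartan_euler false Hu s; rewrite Hdu add0r => ->.
  rewrite /u /g /wt0_part mulNr mulrN opprK mulrA.
  have [->|NE] := eqVneq (wt false s) 0; first by rewrite !mul0r /= mulr1n mul1r subrr.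
  by rewrite mulfV ?intr_eq0 // mul1r /= mulr0n mul0r subr0.
case: (Hb) => [[Hsz _ [S HS]] HiJ _].
split.
- split.
  + by move=> s Hs; rewrite /contr /u Hsz ?mulr0.
  + exact/antisym_alternating/antisym_contr.
  + exists S => s; rewrite /contr /u mulf_eq0 negb_or => /andP [_ /HS] /=.
    by case/andP.
- move=> s; rewrite /iJ /contr /u.
  rewrite (@antisym_nonuniq _ [:: (false, 1%N), (false, 1%N) & s]) ?mulr0 //.
  move: (HiJ ((true, 1%N) :: s)); rewrite /iJ => /eqP; rewrite subr_eq0 => /eqP ->.
  by rewrite (@antisym_nonuniq _ [:: (true, 1%N), (true, 1%N) & s]) ?mulr0 ?subrr.
- move=> s; rewrite (LJ_wt (antisym_contr _ Hu)) /contr /u.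
  have := basic_wt_eq ((false, 1%N) :: s) Hb; rewrite !wt_euler => Hwt.
  by rewrite mulrCA Hwt mulr0 oppr0.
Qed.

Lemma exact_of_wt0_exact k w f eta : basic k.+1 w -> closed w -> basic k eta ->
  (forall s, f s = w s - wt0_part w s + dA eta s) -> exact k.+1 f.
Proof.
move=> Hb Hc He Hf; have [eta1 [H1 D1]] := basic_closed_sub_wt0_exact Hb Hc.
exists (fun s => eta1 s + eta s); split; first exact: basic_add.
move=> s; rewrite (@dA_lin _ eta1 eta 1 1); last by move=> r; rewrite !mul1r.
by rewrite !mul1r D1 Hf.
Qed.

Definition lincomb (l : seq (C * seq basisA)) : form C :=
  fun s => \sum_(p <- l) p.1 * mono C p.2 s.

Lemma lincomb_int l s : lincomb l s = \sum_(p <- l) p.1 * (monoZ p.2 s)%:~R.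
Proof. by apply: eq_bigr => p _; rewrite mono_int. Qed.

Lemma dA_lincomb l s : dA (lincomb l) s = \sum_(p <- l) p.1 * (dZ (monoZ p.2) s)%:~R.
Proof.
elim: l s => [|p l IH] s.
  by rewrite big_nil (@dA_ext _ (fun _ => 0)) ?dA_zero // => r; rewrite /lincomb big_nil.
rewrite big_cons -IH (@dA_lin _ (mono C p.2) (lincomb l) p.1 1); last first.
  by move=> r; rewrite /lincomb big_cons mul1r.
by rewrite mul1r (dA_int (f := monoZ p.2)) //; exact: mono_int.
Qed.

Lemma antisym_lincomb l : antisym (lincomb l).
Proof.
move=> a x y b; rewrite /lincomb -sumrN; apply: eq_bigr => p _.
by rewrite antisym_mono mulrN.
Qed.

Lemma wt0_form_lincomb k l :
  all (fun p => [&& size p.2 == k, wt false p.2 == 0 & wt true p.2 == 0]) l ->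
  wt0_form k (lincomb l).
Proof.
elim: l => [|p l IH] /=; first by move=> _ s; rewrite /lincomb big_nil eqxx.
case/andP => /and3P [/eqP Hk /eqP HA /eqP HB] /IH Hl s.
rewrite /lincomb big_cons.
have Hm := wt0_form_mono HA HB; rewrite Hk in Hm.
by have := wt0_form_add (wt0_form_scale (c := p.1) Hm) Hl; move/(_ s).
Qed.

Lemma wt0_words_wt : all (fun t => (wt false t == 0) && (wt true t == 0)) wt0_words.
Proof. by []. Qed.

Lemma mono_wt0_words t t' : t \in wt0_words -> t' \in wt0_words ->
  mono C t t' = (t == t')%:R.
Proof.
move=> Ht Ht'; rewrite mono_int.
have : all (fun t => all (fun t' => monoZ t t' == (t == t' : nat)%:Z) wt0_words) wt0_words.
  by vm_compute.
by move/allP/(_ t Ht)/allP/(_ t' Ht')/eqP ->; case: (t == t').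
Qed.

Lemma wt0_form_expand k v : antisym v -> wt0_form k v ->
  forall s, v s = lincomb [seq (v t, t) | t <- wt0_deg k] s.
Proof.
move=> Hv Hs; apply: (wt0_form_eq Hv (antisym_lincomb _) Hs).
  apply: wt0_form_lincomb; rewrite all_map; apply/allP => t; rewrite mem_filter.
  by case/andP => /= -> /(allP wt0_words_wt) /andP [-> ->].
move=> t Ht; have Htw : t \in wt0_words by move: Ht; rewrite mem_filter => /andP [].
rewrite /lincomb big_map (bigD1_seq t) //=; last exact/filter_uniq.
rewrite mono_wt0_words // eqxx mulr1 big1_seq ?addr0 // => t' /andP [Ht't Ht'].
have Ht'w : t' \in wt0_words by move: Ht'; rewrite mem_filter => /andP [].
by rewrite mono_wt0_words // (negbTE Ht't) mulr0.
Qed.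

Lemma lincomb_basic k l :
  all (fun p => [&& size p.2 == k, wt false p.2 == 0 & wt true p.2 == 0]) l ->
  (forall t, t \in wt0_deg k.-1 -> iJ (lincomb l) t = 0) -> basic k (lincomb l).
Proof. by move=> Hl; apply: wt0_form_basic; [exact: antisym_lincomb | exact: wt0_form_lincomb]. Qed.

Lemma lincomb_closed k l :
  all (fun p => [&& size p.2 == k, wt false p.2 == 0 & wt true p.2 == 0]) l ->
  (forall t, t \in wt0_deg k.+1 -> dA (lincomb l) t = 0) -> closed (lincomb l).
Proof.
move=> Hl; apply: wt0_form_eq0; first exact/antisym_dA/antisym_lincomb.
exact/wt0_form_dA/wt0_form_lincomb/Hl/antisym_lincomb.
Qed.

Lemma exact_wt0_primitive k r : exact k.+1 r -> exists E,
  [/\ basic k E, antisym E, wt0_form k E & forall t, wt false t = 0 -> dA E t = r t].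
Proof.
case=> eta [Hb Hd]; have Hv := basic_antisym Hb.
exists (wt0_part eta); split.
- exact: wt0_part_basic.
- exact: basic_antisym (wt0_part_basic Hb).
- exact: wt0_part_form.
- by move=> t Ht; rewrite dA_wt0_part // Ht eqxx mul1r Hd.
Qed.

Lemma mul2_eq0 (x : C) : x * 2 = 0 -> x = 0.
Proof. by move/eqP; rewrite mulf_eq0 pnatr_eq0 orbF => /eqP. Qed.

Lemma eq0_lin (L R X c : C) : L = R -> X = c * (L - R) -> X = 0.
Proof. by move=> -> ->; rewrite subrr mulr0. Qed.

Ltac eval_ints := repeat match goal with
  | |- context [monoZ ?g ?s] => let L := fresh "L" in let H := fresh "HL" in
      remember (monoZ g s) as L eqn:H; vm_compute in H; subst L
  | |- context [dZ ?f ?s] => let L := fresh "L" in let H := fresh "HL" in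
      remember (dZ f s) as L eqn:H; vm_compute in H; subst L
  end.

Ltac case_word := move=> ?; rewrite !inE;
  repeat (case/orP; [move/eqP-> | ]); try move/eqP->.


(* Keeps [/=] from unfolding the integer evaluations, left to [eval_ints]. *)
Opaque monoZ dZ.

Lemma H1_vanishes : H_vanishes C 1.
Proof.
move=> w Hb Hc; have [_ HWa HWf HWc] := wt0_part_props Hb Hc.
set W := wt0_part w in HWa HWf HWc *.
have := wt0_form_expand HWa HWf; rewrite wt0_deg1 /=.
set b1 := W [:: B1]; set a1 := W [:: A1] => E.
move: (HWc [:: B0; B2]); rewrite (dA_ext E) dA_lincomb !big_cons big_nil /=; eval_ints => R1.
move: (HWc [:: A0; A2]); rewrite (dA_ext E) dA_lincomb !big_cons big_nil /=; eval_ints => R2.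
have Hb1 : b1 = 0 by apply: mul2_eq0; rewrite -oppr0 -R1; ring.
have Ha1 : a1 = 0 by apply: mul2_eq0; rewrite -oppr0 -R2; ring.
apply: (exact_of_wt0_exact Hb Hc (basic_zero 0)) => s.
by rewrite -/W E lincomb_int !big_cons big_nil /= Hb1 Ha1 dA_zero; ring.
Qed.

Lemma H4_vanishes : H_vanishes C 4.
Proof.
move=> w Hb Hc; have [HWb HWa HWf _] := wt0_part_props Hb Hc.
set W := wt0_part w in HWb HWa HWf *.
have := wt0_form_expand HWa HWf; rewrite wt0_deg4 /=.
set x := W [:: A1; B0; B1; B2]; set y := W [:: A0; A2; B0; B2]; set z := W [:: A0; A1; A2; B1].
move=> E; case: HWb => _ HiJ _.
move: (HiJ [:: B0; B1; B2]); rewrite /iJ !E !lincomb_int !big_cons !big_nil /=; eval_ints => R1.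
move: (HiJ [:: A0; A2; B1]); rewrite /iJ !E !lincomb_int !big_cons !big_nil /=; eval_ints => R2.
have Hx : x = 0 by rewrite -R1; ring.
have Hz : z = 0 by rewrite -oppr0 -R2; ring.
pose eta := lincomb [:: (- (y / 2), [:: A0; A2; B1]); (y / 2, [:: A0; A1; A2])].
have Be : basic 3 eta.
  apply: lincomb_basic => //; rewrite wt0_deg2; case_word;
    rewrite /iJ !lincomb_int !big_cons !big_nil /=; eval_ints; ring.
apply: (exact_of_wt0_exact Hb Hc Be) => s.
rewrite -/W; suff -> : W s = dA eta s by ring.
apply: (wt0_form_eq HWa (antisym_dA (antisym_lincomb _)) HWf
  (wt0_form_dA (antisym_lincomb _) (wt0_form_lincomb _))) => //.
rewrite wt0_deg4; case_word; rewrite E lincomb_int dA_lincomb !big_cons !big_nil /=;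
  by eval_ints; rewrite Hx Hz; field.
Qed.

Lemma H6_vanishes : H_vanishes C 6.
Proof.
move=> w Hb Hc; have [HWb HWa HWf _] := wt0_part_props Hb Hc.
set W := wt0_part w in HWb HWa HWf *.
have := wt0_form_expand HWa HWf; rewrite wt0_deg6 /=.
set x := W [:: A0; A1; A2; B0; B1; B2] => E; case: HWb => _ HiJ _.
move: (HiJ [:: A0; A2; B0; B1; B2]); rewrite /iJ !E !lincomb_int !big_cons !big_nil /=;
  eval_ints => R1.
have Hx : x = 0 by rewrite -oppr0 -R1; ring.
apply: (exact_of_wt0_exact Hb Hc (basic_zero 5)) => s.
by rewrite -/W E lincomb_int !big_cons big_nil /= Hx dA_zero; ring.
Qed.

Lemma H_vanishes_gt6 k : (6 < k)%N -> H_vanishes C k.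
Proof.
case: k => [//|k] Hk w Hb Hc; have [_ HWa HWf _] := wt0_part_props Hb Hc.
have E := wt0_form_expand HWa HWf; rewrite wt0_deg_gt6 // in E.
apply: (exact_of_wt0_exact Hb Hc (basic_zero k)) => s.
by rewrite E /lincomb big_nil dA_zero; ring.
Qed.

Lemma H0_line : H_is_line_spanned_by 0 (rep0 C).
Proof.
split.
- apply: wt0_form_basic; [exact: antisym_mono | exact: (wt0_form_mono (gs := [::])) |].
  by move=> t _; rewrite /iJ /rep0 /= subrr.
- by move=> s; apply: big1 => j _; apply: big1 => i _; rewrite /rep0 /= mulr0n mulr0.
- by move/(_ [::]); rewrite /rep0 /= mulr1n => /eqP; rewrite oner_eq0.
- move=> w [[Hsz _ _] _ _] _; exists (w [::]) => s.
  case: s => [|x s]; first by rewrite /rep0 /= mulr1n mulr1 subrr.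
  by rewrite Hsz // /rep0 /= mulr0n mulr0 subrr.
Qed.

Definition rep2_terms : seq (C * seq basisA) := [:: (1, [:: A0; A2])].

Lemma rep2E : rep2 C = lincomb rep2_terms.
Proof. by apply: funext => s; rewrite /rep2 /lincomb /rep2_terms big_cons big_nil mul1r addr0. Qed.

Lemma rep2_not_exact : ~ exact 2 (lincomb rep2_terms).
Proof.
case/exact_wt0_primitive => E [[_ HiJ _] HEa HEf D].
have := wt0_form_expand HEa HEf; rewrite wt0_deg1 /=.
set b := E [:: B1]; set a := E [:: A1] => EE.
move: (HiJ [::]); rewrite /iJ !EE !lincomb_int !big_cons !big_nil /=; eval_ints => R1.
move: (D [:: A0; A2] erefl); rewrite (dA_ext EE) dA_lincomb lincomb_int !big_cons !big_nil /=;
  eval_ints => R2.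
move: (D [:: B0; B2] erefl); rewrite (dA_ext EE) dA_lincomb lincomb_int !big_cons !big_nil /=;
  eval_ints => R3.
have Hb0 : b = 0 by apply: mul2_eq0; apply: (eq0_lin (c := -1) R3); ring.
have Ha0 : a = 0 by apply: (eq0_lin (c := 1) R1); rewrite Hb0; ring.
have : (1 : C) = 0 by apply: (eq0_lin (c := -1) R2); rewrite Ha0 Hb0; ring.
by move/eqP; rewrite oner_eq0.
Qed.

Lemma rep2_spans w : basic 2 w -> closed w ->
  exists c, exact 2 (fun s => w s - c * lincomb rep2_terms s).
Proof.
move=> Hb Hc; have [HWb HWa HWf _] := wt0_part_props Hb Hc.
set W := wt0_part w in HWb HWa HWf *.
have := wt0_form_expand HWa HWf; rewrite wt0_deg2 /=.
set g := W [:: B0; B2]; set d := W [:: A1; B1]; set a := W [:: A0; A2] => E.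
case: HWb => _ HiJ _.
move: (HiJ [:: B1]); rewrite /iJ !E !lincomb_int !big_cons !big_nil /=; eval_ints => R1.
have Hd0 : d = 0 by apply: (eq0_lin (c := 1) R1); ring.
pose eta := lincomb [:: (- (g / 2), [:: A1]); (- (g / 2), [:: B1])].
have Be : basic 1 eta.
  apply: lincomb_basic => //; rewrite wt0_deg0; case_word;
    rewrite /iJ !lincomb_int !big_cons !big_nil /=; eval_ints; ring.
exists (a - g); apply: (exact_of_wt0_exact Hb Hc Be) => s.
rewrite -/W; suff -> : W s = (a - g) * lincomb rep2_terms s + dA eta s by ring.
apply: (wt0_form_eq HWa (antisym_add (antisym_scale _ (antisym_lincomb _))
    (antisym_dA (antisym_lincomb _))) HWf (wt0_form_add (wt0_form_scale (wt0_form_lincomb _))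
    (wt0_form_dA (antisym_lincomb _) (wt0_form_lincomb _)))) => //.
rewrite wt0_deg2; case_word; rewrite /eta E !lincomb_int dA_lincomb !big_cons !big_nil /=;
  by eval_ints; rewrite Hd0; field.
Qed.

Lemma H2_line : H_is_line_spanned_by 2 (rep2 C).
Proof.
rewrite rep2E; split; [| | exact: rep2_not_exact | exact: rep2_spans].
- apply: lincomb_basic => //; rewrite wt0_deg1; case_word;
    rewrite /iJ !lincomb_int !big_cons !big_nil /=; eval_ints; ring.
- apply: (@lincomb_closed 2) => //; rewrite wt0_deg3; case_word;
    rewrite dA_lincomb !big_cons !big_nil /=; eval_ints; ring.
Qed.

Definition rep3_terms : seq (C * seq basisA) :=
  [:: (1, [:: A0; A2; A1]); (1, [:: A0; A2; B1]); (-1, [:: B0; B2; A1]); (-1, [:: B0; B2; B1])].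

Lemma rep3E : rep3 C = lincomb rep3_terms.
Proof.
by apply: funext => s; rewrite /rep3 /subf /addf /lincomb /rep3_terms !big_cons big_nil /=; ring.
Qed.

Lemma rep3_not_exact : ~ exact 3 (lincomb rep3_terms).
Proof.
case/exact_wt0_primitive => E [[_ HiJ _] HEa HEf D].
have := wt0_form_expand HEa HEf; rewrite wt0_deg2 /=.
set g := E [:: B0; B2]; set d := E [:: A1; B1]; set a := E [:: A0; A2] => EE.
move: (HiJ [:: B1]); rewrite /iJ !EE !lincomb_int !big_cons !big_nil /=; eval_ints => R1.
move: (D [:: A0; A2; B1] erefl); rewrite (dA_ext EE) dA_lincomb lincomb_int !big_cons !big_nil /=;
  eval_ints => R2.
have Hd0 : d = 0 by apply: (eq0_lin (c := 1) R1); ring.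
have : (1 : C) = 0 by apply: (eq0_lin (c := -1) R2); rewrite Hd0; ring.
by move/eqP; rewrite oner_eq0.
Qed.

Lemma rep3_spans w : basic 3 w -> closed w ->
  exists c, exact 3 (fun s => w s - c * lincomb rep3_terms s).
Proof.
move=> Hb Hc; have [HWb HWa HWf HWc] := wt0_part_props Hb Hc.
set W := wt0_part w in HWb HWa HWf HWc *.
have := wt0_form_expand HWa HWf; rewrite wt0_deg3 /=.
set p := W [:: B0; B1; B2]; set q := W [:: A1; B0; B2]; set u := W [:: A0; A2; B1].
set t := W [:: A0; A1; A2] => E.
case: HWb => _ HiJ _.
move: (HiJ [:: B0; B2]); rewrite /iJ !E !lincomb_int !big_cons !big_nil /=; eval_ints => R1.
move: (HiJ [:: A0; A2]); rewrite /iJ !E !lincomb_int !big_cons !big_nil /=; eval_ints => R2.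
move: (HWc [:: A0; A2; B0; B2]); rewrite (dA_ext E) dA_lincomb !big_cons big_nil /=;
  eval_ints => R3.
have Hq : q = - p by apply/eqP; rewrite -addr_eq0; apply/eqP/(eq0_lin (c := 1) R1); ring.
have Hu : u = - q.
  by apply/eqP; rewrite -addr_eq0; apply/eqP/mul2_eq0/(eq0_lin (c := -1) R3); ring.
have Ht : t = - u by apply/eqP; rewrite -addr_eq0; apply/eqP/(eq0_lin (c := -1) R2); ring.
exists p; apply: (exact_of_wt0_exact Hb Hc (basic_zero 2)) => s.
rewrite -/W; suff -> : W s = p * lincomb rep3_terms s by rewrite dA_zero; ring.
apply: (wt0_form_eq HWa (antisym_scale _ (antisym_lincomb _)) HWf
  (wt0_form_scale (wt0_form_lincomb _))) => //.
rewrite wt0_deg3; case_word; rewrite E !lincomb_int !big_cons !big_nil /=; eval_ints;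
  rewrite ?Ht ?Hu ?Hq; ring.
Qed.

Lemma H3_line : H_is_line_spanned_by 3 (rep3 C).
Proof.
rewrite rep3E; split; [| | exact: rep3_not_exact | exact: rep3_spans].
- apply: lincomb_basic => //; rewrite wt0_deg2; case_word;
    rewrite /iJ !lincomb_int !big_cons !big_nil /=; eval_ints; ring.
- apply: (@lincomb_closed 3) => //; rewrite wt0_deg4; case_word;
    rewrite dA_lincomb !big_cons !big_nil /=; eval_ints; ring.
Qed.

Definition rep5_terms : seq (C * seq basisA) :=
  [:: (1, [:: A2; A0; B2; B0; A1]); (1, [:: A2; A0; B2; B0; B1])].

Lemma rep5E : rep5 C = lincomb rep5_terms.
Proof.
by apply: funext => s; rewrite /rep5 /addf /lincomb /rep5_terms !big_cons big_nil /=; ring.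
Qed.

Lemma rep5_not_exact : ~ exact 5 (lincomb rep5_terms).
Proof.
case/exact_wt0_primitive => E [[_ HiJ _] HEa HEf D].
have := wt0_form_expand HEa HEf; rewrite wt0_deg4 /=.
set x := E [:: A1; B0; B1; B2]; set y := E [:: A0; A2; B0; B2].
set z := E [:: A0; A1; A2; B1] => EE.
move: (HiJ [:: B0; B1; B2]); rewrite /iJ !EE !lincomb_int !big_cons !big_nil /=; eval_ints => R1.
move: (D [:: A0; A2; B0; B1; B2] erefl);
  rewrite (dA_ext EE) dA_lincomb lincomb_int !big_cons !big_nil /=; eval_ints => R2.
have Hx0 : x = 0 by apply: (eq0_lin (c := 1) R1); ring.
have : (1 : C) = 0 by apply: (eq0_lin (c := 1) R2); rewrite Hx0; ring.
by move/eqP; rewrite oner_eq0.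
Qed.

Lemma rep5_spans w : basic 5 w -> closed w ->
  exists c, exact 5 (fun s => w s - c * lincomb rep5_terms s).
Proof.
move=> Hb Hc; have [HWb HWa HWf _] := wt0_part_props Hb Hc.
set W := wt0_part w in HWb HWa HWf *.
have := wt0_form_expand HWa HWf; rewrite wt0_deg5 /=.
set x := W [:: A0; A2; B0; B1; B2]; set y := W [:: A0; A1; A2; B0; B2] => E.
case: HWb => _ HiJ _.
move: (HiJ [:: A0; A2; B0; B2]); rewrite /iJ !E !lincomb_int !big_cons !big_nil /=;
  eval_ints => R1.
have Hy : y = x by apply/eqP; rewrite -subr_eq0; apply/eqP/(eq0_lin (c := -1) R1); ring.
exists (- x); apply: (exact_of_wt0_exact Hb Hc (basic_zero 4)) => s.
rewrite -/W; suff -> : W s = - x * lincomb rep5_terms s by rewrite dA_zero; ring.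
apply: (wt0_form_eq HWa (antisym_scale _ (antisym_lincomb _)) HWf
  (wt0_form_scale (wt0_form_lincomb _))) => //.
rewrite wt0_deg5; case_word; rewrite E !lincomb_int !big_cons !big_nil /=; eval_ints;
  rewrite ?Hy; ring.
Qed.

Lemma H5_line : H_is_line_spanned_by 5 (rep5 C).
Proof.
rewrite rep5E; split; [| | exact: rep5_not_exact | exact: rep5_spans].
- apply: lincomb_basic => //; rewrite wt0_deg4; case_word;
    rewrite /iJ !lincomb_int !big_cons !big_nil /=; eval_ints; ring.
- apply: (@lincomb_closed 5) => //; rewrite wt0_deg6; case_word;
    rewrite dA_lincomb !big_cons !big_nil /=; eval_ints; ring.
Qed.

End Forms.

Theorem mainTheorem3 (R : realType) :
  [/\ H_is_line_spanned_by 0 (rep0 R[i]),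
      H_is_line_spanned_by 2 (rep2 R[i]),
      H_is_line_spanned_by 3 (rep3 R[i]),
      H_is_line_spanned_by 5 (rep5 R[i]) &
      forall k : nat, k \notin [:: 0; 2; 3; 5]%N -> H_vanishes R[i] k].
Proof.
split; [exact: H0_line | exact: H2_line | exact: H3_line | exact: H5_line |].
move=> k; rewrite !inE.
case: k => [|[|[|[|[|[|[|k]]]]]]] //= _; [exact: H1_vanishes | exact: H4_vanishes |
  exact: H6_vanishes |].
exact: H_vanishes_gt6.
Qed.
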